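(* Under the Setting, Algorithm and Strong convexity assumption described in the context, if $\{x_k\}_{k\ge1}$ is generated by the inexact CSA algorithm with policy (P2), then $\mathcal B\neq\emptyset$, so that $\bar x_{N,s}=\sum_{k\in\mathcal B}\rho_kx_k/\sum_{k\in\mathcal B}\rho_k$ is well defined.
   Context: Setting. $\mathcal X\subset\mathbb R^n$ is convex and compact; $f:\mathcal X\to\mathbb R$ is convex and $L_f$-Lipschitz; $\Delta\subset\mathbb R^d$ is compact; $g:\mathcal X\times\Delta\to\mathbb R$ is such that for every $\delta\in\Delta$, $x\mapsto g(x,\delta)$ is convex and $L_{g,\mathcal X}$-Lipschitz, and for every $x\in\mathcal X$, $\delta\mapsto g(x,\delta)$ is $L_{g,\Delta}$-Lipschitz. Let $G(x):=\max_{\delta\in\Delta}g(x,\delta)$ and assume the problem $\min_{x\in\mathcal X}\{f(x):G(x)\le0\}$ has an optimal solution $x^*$. Norms are Euclidean. $f'(x)$ denotes a subgradient of $f$ at $x$ and $g'(x,\delta)$ a subgradient of $g(\cdot,\delta)$ at $x$. Let $\omega_{\mathcal X}:\mathcal X\to\mathbb R$ be continuously differentiable and $1$-strongly convex; $V(x,z):=\omega_{\mathcal X}(z)-\omega_{\mathcal X}(x)-\langle\nabla\omega_{\mathcal X}(x),z-x\rangle$; prox-mapping $P_{x,\mathcal X}(y):=\arg\min_{z\in\mathcal X}\{\langle y,z\rangle+V(x,z)\}$; $D_{\mathcal X}:=\sqrt{\max_{x,z\in\mathcal X}V(x,z)}$. Algorithm (inexact CSA). Inputs: $N\ge1$, $x_1\in\mathcal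 X$, tolerances $\eta_k>0$, step-sizes $\gamma_k>0$. For $k=1,\dots,N$: choose some $\delta_k\in\Delta$ (an approximate maximizer of $g(x_k,\cdot)$); set $h_k=f'(x_k)$ if $g(x_k,\delta_k)\le\eta_k$ and $h_k=g'(x_k,\delta_k)$ otherwise; set $x_{k+1}=P_{x_k,\mathcal X}(\gamma_kh_k)$. For $1\le s\le N$ let $I=\{s,\dots,N\}$, $\mathcal B:=\{k\in I: g(x_k,\delta_k)\le\eta_k\}$, $\mathcal N:=I\setminus\mathcal B$. Strong convexity assumption: $f$ is strongly convex with parameter $\mu_f>0$ (i.e. $f(x)\ge f(z)+\langle f'(z),x-z\rangle+\frac{\mu_f}{2}\|x-z\|^2$), each $g(\cdot,\delta)$ is strongly convex with parameter $\mu_g>0$ uniformly in $\delta$, and there is $L>0$ with $V(x,z)\le\frac L2\|x-z\|^2$ for all $x,z\in\mathcal X$. Define $a_k=\mu_f\gamma_k/L$ if $g(x_k,\delta_k)\le\eta_k$ and $a_k=\mu_g\gamma_k/L$ otherwise; $A_1=1$, $A_k=(1-a_k)A_{k-1}$ for $k\ge2$; $\rho_k=\gamma_k/A_k$. Policy (P2): for $k=1,\dots,N$, $\eta_k=\frac{8L}{N}\max\{\mu_f,\mu_g\}\max\{\frac{L_f^2}{\mu_f^2},\frac{L_{g,\mathcal X}^2}{\mu_g^2}\}$, $\gamma_k=\frac{2L}{\mu_f(k+1)}$ if $g(x_k,\delta_k)\le\eta_k$ and $\gamma_k=\frac{2L}{\mu_g(k+1)}$ otherwise, and $s=1$. *)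

From Stdlib Require Import Reals.
From mathcomp Require Import ssreflect ssrfun ssrbool eqtype ssrnat seq fintype bigop.
Set Implicit Arguments. Unset Strict Implicit.
Local Open Scope R_scope.

Definition vec (n : nat) := 'I_n -> R.
Definition dot {n : nat} (x y : vec n) : R := \big[Rplus/0]_(i < n) (x i * y i).
Definition vadd {n : nat} (x y : vec n) : vec n := fun i => x i + y i.
Definition vsub {n : nat} (x y : vec n) : vec n := fun i => x i - y i.
Definition vscal {n : nat} (a : R) (x : vec n) : vec n := fun i => a * x i.
Definition norm {n : nat} (x : vec n) : R := sqrt (dot x x).
Definition comb {n : nat} (t : R) (x z : vec n) : vec n :=
  vadd (vscal t x) (vscal (1 - t) z).

Definition convex_set {n : nat} (X : vec n -> Prop) : Prop :=
  forall x z t, X x -> X z -> 0 <= t <= 1 -> X (comb t x z).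

(* compactness (sequential compactness, = compactness in the metric space R^n) *)
Definition compact_set {n : nat} (X : vec n -> Prop) : Prop :=
  forall u : nat -> vec n, (forall k, X (u k)) ->
  exists (phi : nat -> nat) (l : vec n),
    (forall k, (phi k < phi (S k))%nat) /\ X l /\
    forall eps, 0 < eps -> exists K : nat, forall k, (K <= k)%nat ->
      norm (vsub (u (phi k)) l) < eps.

Definition convex_on {n : nat} (X : vec n -> Prop) (f : vec n -> R) : Prop :=
  forall x z t, X x -> X z -> 0 <= t <= 1 ->
    f (comb t x z) <= t * f x + (1 - t) * f z.

Definition strongly_convex_on {n : nat} (X : vec n -> Prop) (mu : R)
  (f : vec n -> R) : Prop :=
  forall x z t, X x -> X z -> 0 <= t <= 1 ->
    f (comb t x z) <= t * f x + (1 - t) * f z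
                      - mu / 2 * t * (1 - t) * (norm (vsub x z)) ^ 2.

Definition lipschitz_on {n : nat} (X : vec n -> Prop) (Lc : R)
  (f : vec n -> R) : Prop :=
  forall x z, X x -> X z -> Rabs (f x - f z) <= Lc * norm (vsub x z).

Definition subgradient {n : nat} (X : vec n -> Prop) (f : vec n -> R)
  (x s : vec n) : Prop :=
  forall z, X z -> f x + dot s (vsub z x) <= f z.

Definition gradient_on {n : nat} (X : vec n -> Prop) (f : vec n -> R)
  (df : vec n -> vec n) : Prop :=
  forall x, X x -> forall eps, 0 < eps -> exists del, 0 < del /\
    forall z, X z -> norm (vsub z x) < del ->
      Rabs (f z - f x - dot (df x) (vsub z x)) <= eps * norm (vsub z x).

Definition continuous_vec_on {n m : nat} (X : vec n -> Prop)
  (F : vec n -> vec m) : Prop :=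
  forall x, X x -> forall eps, 0 < eps -> exists del, 0 < del /\
    forall z, X z -> norm (vsub z x) < del -> norm (vsub (F z) (F x)) < eps.

(* Bregman distance V(x,z) and prox-mapping P_{x,X}(y) (as its defining
   argmin property; the argmin is unique by strong convexity of omega) *)
Definition bregman {n : nat} (omega : vec n -> R) (domega : vec n -> vec n)
  (x z : vec n) : R :=
  omega z - omega x - dot (domega x) (vsub z x).

Definition is_prox {n : nat} (X : vec n -> Prop) (omega : vec n -> R)
  (domega : vec n -> vec n) (x y p : vec n) : Prop :=
  X p /\ forall z, X z ->
    dot y p + bregman omega domega x p <= dot y z + bregman omega domega x z.

(* G(x) <= 0, where G(x) = max_{delta in Delta} g(x,delta) *)
Definition G_nonpos {n d : nat} (Delta : vec d -> Prop) (g : vec n -> vec d -> R)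
  (x : vec n) : Prop :=
  forall dl, Delta dl -> g x dl <= 0.

Definition eta_P2 (N : nat) (L muf mug Lf LgX : R) : R :=
  8 * L / INR N * Rmax muf mug * Rmax (Lf ^ 2 / muf ^ 2) (LgX ^ 2 / mug ^ 2).

Definition inB {n d : nat} (g : vec n -> vec d -> R) (x : nat -> vec n)
  (delta : nat -> vec d) (eta : R) (k : nat) : bool :=
  if Rle_dec (g (x k) (delta k)) eta then true else false.

Definition csa_h {n d : nat} (fp : vec n -> vec n) (gp : vec n -> vec d -> vec n)
  (g : vec n -> vec d -> R) (x : nat -> vec n) (delta : nat -> vec d)
  (eta : R) (k : nat) : vec n :=
  if inB g x delta eta k then fp (x k) else gp (x k) (delta k).

Definition gamma_P2 {n d : nat} (L muf mug : R) (g : vec n -> vec d -> R)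
  (x : nat -> vec n) (delta : nat -> vec d) (eta : R) (k : nat) : R :=
  if inB g x delta eta k then 2 * L / (muf * (INR k + 1))
  else 2 * L / (mug * (INR k + 1)).

Definition a_csa {n d : nat} (L muf mug : R) (g : vec n -> vec d -> R)
  (x : nat -> vec n) (delta : nat -> vec d) (eta : R) (k : nat) : R :=
  if inB g x delta eta k then muf * gamma_P2 L muf mug g x delta eta k / L
  else mug * gamma_P2 L muf mug g x delta eta k / L.

Fixpoint A_csa {n d : nat} (L muf mug : R) (g : vec n -> vec d -> R)
  (x : nat -> vec n) (delta : nat -> vec d) (eta : R) (k : nat) : R :=
  match k with
  | O => 1
  | S O => 1
  | S k' => (1 - a_csa L muf mug g x delta eta k) * A_csa L muf mug g x delta eta k'
  end.

Definition rho_csa {n d : nat} (L muf mug : R) (g : vec n -> vec d -> R)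
  (x : nat -> vec n) (delta : nat -> vec d) (eta : R) (k : nat) : R :=
  gamma_P2 L muf mug g x delta eta k / A_csa L muf mug g x delta eta k.

(* Let xs be an optimal solution and V_k = V(x_k, xs).  If no iterate were
   nearly feasible, every step would be a prox step along a subgradient of the
   mu_g-strongly convex function g(., delta_k) with gamma_k = 2L/(mu_g (k+1)).
   The three-point property of the prox-mapping, strong convexity,
   g(xs, delta_k) <= 0 and V_k <= L/2 |x_k - xs|^2 give
   k(k+1) V_{k+1} + 2 L k eta / mu_g < (k-1)k V_k + 2 L^2 L_g^2 / mu_g^2.
   Summing over k = 1..N yields eta (N+1) < 2 L L_g^2 / mu_g, which the tolerance
   eta >= 8 L L_g^2 / (mu_g N) of policy (P2) forbids.  Since every rho_k is
   positive, the weights of B then have a positive sum. *)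

From HB Require Import structures.
From Stdlib Require Import Reals Lra FunctionalExtensionality.
From mathcomp Require Import ssreflect ssrfun ssrbool eqtype ssrnat seq fintype bigop.
Local Open Scope R_scope.

HB.instance Definition _ := Monoid.isComLaw.Build R 0 Rplus
  (fun x y z => esym (Rplus_assoc x y z)) Rplus_comm Rplus_0_l.

Lemma sumR_scal (I : Type) (r : seq I) (P : pred I) (a : R) (F : I -> R) :
  \big[Rplus/0]_(i <- r | P i) (a * F i) = a * \big[Rplus/0]_(i <- r | P i) F i.
Proof. by rewrite (big_morph (Rmult a) (Rmult_plus_distr_l a) (Rmult_0_r a)). Qed.

Lemma sumR_opp (I : Type) (r : seq I) (P : pred I) (F : I -> R) :
  \big[Rplus/0]_(i <- r | P i) (- F i) = - \big[Rplus/0]_(i <- r | P i) F i.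
Proof. by rewrite (big_morph Ropp Ropp_plus_distr Ropp_0). Qed.

Lemma sumR_ge0 (I : Type) (r : seq I) (P : pred I) (F : I -> R) :
  (forall i, P i -> 0 <= F i) -> 0 <= \big[Rplus/0]_(i <- r | P i) F i.
Proof. by move=> F_ge0; apply: big_ind => //; [lra | move=> *; lra]. Qed.

Lemma sumR_gt0_witness {I : eqType} {r : seq I} {P : pred I} {F : I -> R} {j : I} :
  uniq r -> j \in r -> P j -> (forall i, 0 < F i) ->
  0 < \big[Rplus/0]_(i <- r | P i) F i.
Proof.
move=> r_uniq jr Pj F_gt0.
rewrite big_mkcond (bigD1_seq j) //= Pj.
have : 0 <= \big[Rplus/0]_(i <- r | i != j) (if P i then F i else 0).
  by apply: sumR_ge0 => i _; case: (P i); [apply: Rlt_le | lra].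
have := F_gt0 j; lra.
Qed.

Section DotProduct.
Context {n : nat}.
Implicit Types u v w : vec n.

Lemma dotC u v : dot u v = dot v u.
Proof. by apply: eq_bigr => i _; rewrite Rmult_comm. Qed.

Lemma dot_subr u v w : dot u (vsub v w) = dot u v - dot u w.
Proof.
rewrite /dot /vsub /Rminus -sumR_opp -big_split /=.
by apply: eq_bigr => i _; ring.
Qed.

Lemma dot_subl u v w : dot (vsub u v) w = dot u w - dot v w.
Proof. by rewrite dotC dot_subr !(dotC w). Qed.

Lemma dot_scalr a u v : dot u (vscal a v) = a * dot u v.
Proof. by rewrite /dot -sumR_scal; apply: eq_bigr => i _; rewrite /vscal; ring. Qed.

Lemma dot_scall a u v : dot (vscal a u) v = a * dot u v.
Proof. by rewrite dotC dot_scalr dotC. Qed.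

Lemma dot_self_ge0 u : 0 <= dot u u.
Proof. by apply: sumR_ge0 => i _; apply: Rle_0_sqr. Qed.

Lemma norm_ge0 u : 0 <= norm u.
Proof. exact: sqrt_pos. Qed.

Lemma norm_sq u : norm u ^ 2 = dot u u.
Proof. by rewrite /norm pow2_sqrt //; apply: dot_self_ge0. Qed.

Lemma norm_vsubC u v : norm (vsub u v) = norm (vsub v u).
Proof. by rewrite /norm /dot; congr sqrt; apply: eq_bigr => i _; rewrite /vsub; ring. Qed.

Lemma norm_scal a u : 0 <= a -> norm (vscal a u) = a * norm u.
Proof.
move=> a_ge0; rewrite /norm dot_scall dot_scalr -Rmult_assoc.
by rewrite sqrt_mult ?sqrt_square //; [apply: Rmult_le_pos | apply: dot_self_ge0].
Qed.

Lemma dot_le_half_sq u v : dot u v <= (norm u ^ 2 + norm v ^ 2) / 2.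
Proof.
have := dot_self_ge0 (vsub u v).
rewrite !norm_sq !dot_subl !dot_subr (dotC v u); lra.
Qed.

Lemma comb_sub t u v : vsub (comb t u v) v = vscal t (vsub u v).
Proof. by apply: functional_extensionality => i; rewrite /vsub /comb /vadd /vscal; ring. Qed.

End DotProduct.

Lemma Rabs_le_bounds a b : Rabs a <= b -> - b <= a <= b.
Proof. by move=> ab; have := Rle_abs a; have := Rle_abs (- a); rewrite Rabs_Ropp; lra. Qed.

Lemma Rle_of_forall_eps_mul a b c :
  0 <= c -> (forall eps, 0 < eps -> a <= b + eps * c) -> a <= b.
Proof.
move=> c_ge0 ab; apply: Rle_plus_epsilon => eps eps_gt0.
have c1_gt0 : 0 < c + 1 by lra.
have eps'_gt0 : 0 < eps / (c + 1) by apply: Rdiv_lt_0_compat.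
have := ab _ eps'_gt0.
have : eps / (c + 1) * c <= eps / (c + 1) * (c + 1) by apply: Rmult_le_compat_l; lra.
have -> : eps / (c + 1) * (c + 1) = eps by field; lra.
lra.
Qed.

Section Prox.
Context {n : nat} {X : vec n -> Prop} {omega : vec n -> R} {domega : vec n -> vec n}.
Hypotheses (X_convex : convex_set X) (omega_grad : gradient_on X omega domega).
Local Notation V := (bregman omega domega).

Lemma gradient_on_segment {x p eps t0} : X x -> X p -> 0 < eps -> 0 < t0 ->
  exists t, 0 < t /\ t <= 1 /\ t <= t0 /\ X (comb t p x) /\
    Rabs (omega (comb t p x) - omega x - t * dot (domega x) (vsub p x))
      <= eps * t * norm (vsub p x).
Proof.
move=> Xx Xp eps_gt0 t0_gt0.
have [del [del_gt0 expand]] := omega_grad _ Xx _ eps_gt0.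
set r := norm (vsub p x); have r_ge0 : 0 <= r := norm_ge0 _.
have del'_gt0 : 0 < del / (2 * (r + 1)) by apply: Rdiv_lt_0_compat; lra.
set t := Rmin (Rmin 1 t0) (del / (2 * (r + 1))).
have t_gt0 : 0 < t by do 2 apply: Rmin_pos => //; lra.
have t_le1 : t <= 1 by apply: Rle_trans (Rmin_l _ _) (Rmin_l _ _).
have t_le_t0 : t <= t0 by apply: Rle_trans (Rmin_l _ _) (Rmin_r _ _).
have t_le_del : t * (r + 1) <= del / 2.
  have -> : del / 2 = del / (2 * (r + 1)) * (r + 1) by field; lra.
  by apply: Rmult_le_compat_r; [lra | apply: Rmin_r].
have Xpt : X (comb t p x) by apply: X_convex => //; lra.
have dist : norm (vsub (comb t p x) x) = t * r by rewrite comb_sub norm_scal //; lra.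
exists t; do 4 split => //.
have close : norm (vsub (comb t p x) x) < del by rewrite dist; nra.
by move: (expand _ Xpt close); rewrite dist comb_sub dot_scalr Rmult_assoc.
Qed.

Lemma bregman_ge_half_sq {x p} : strongly_convex_on X 1 omega -> X x -> X p ->
  norm (vsub p x) ^ 2 / 2 <= V x p.
Proof.
move=> omega_sc Xx Xp; rewrite /bregman.
set r := norm (vsub p x); have r_ge0 : 0 <= r := norm_ge0 _.
apply: (@Rle_of_forall_eps_mul _ _ (r + r ^ 2 / 2)); first nra.
move=> eps eps_gt0.
have [t [t_gt0 [t_le1 [t_le_eps [_ expand]]]]] :=
  gradient_on_segment Xx Xp eps_gt0 eps_gt0.
have := omega_sc p x t Xp Xx (conj (Rlt_le _ _ t_gt0) t_le1).
move: expand => /Rabs_le_bounds; rewrite -/r.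
set D := dot (domega x) (vsub p x) => expand sc.
(* dividing the chord inequality by [t] leaves an error [t r^2 / 2 <= eps r^2 / 2] *)
have chord : t * (r ^ 2 / 2 - t * (r ^ 2 / 2) - eps * r) <= t * (omega p - omega x - D)
  by nra.
have := Rmult_le_reg_l _ _ _ t_gt0 chord.
have : t * (r ^ 2 / 2) <= eps * (r ^ 2 / 2) by apply: Rmult_le_compat_r; nra.
lra.
Qed.

(* First-order optimality of the prox-mapping. *)
Lemma prox_three_point {x y p z} : X z -> is_prox X omega domega x y p ->
  dot y (vsub p z) <= V x z - V p z - V x p.
Proof.
move=> Xz [Xp p_min].
set w := vsub z p; set r := norm w.
suff first_order : 0 <= dot y w + dot (domega p) w - dot (domega x) w.
  by move: first_order; rewrite /w /bregman !dot_subr; lra.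
apply: (@Rle_of_forall_eps_mul _ _ r); first exact: norm_ge0.
move=> eps eps_gt0.
have [t [t_gt0 [_ [_ [Xzt expand]]]]] := gradient_on_segment Xp Xz eps_gt0 Rlt_0_1.
move: expand => /Rabs_le_bounds; rewrite -/w -/r => expand.
have dy : dot y (comb t z p) = dot y p + t * dot y w.
  by have := dot_subr y (comb t z p) p; rewrite comb_sub dot_scalr -/w; lra.
have dx : dot (domega x) (vsub (comb t z p) x) = dot (domega x) (vsub p x) + t * dot (domega x) w.
  have := dot_subr (domega x) (comb t z p) x; have := dot_subr (domega x) p x.
  by have := dot_subr (domega x) (comb t z p) p; rewrite comb_sub dot_scalr -/w; lra.
have := p_min _ Xzt; rewrite /bregman dy dx => p_le_zt.
have scaled : t * 0 <= t * (dot y w + dot (domega p) w - dot (domega x) w + eps * r)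
  by nra.
have := Rmult_le_reg_l _ _ _ t_gt0 scaled; lra.
Qed.

Lemma prox_step_bound {x gam h p z} : strongly_convex_on X 1 omega -> X x -> X z ->
  is_prox X omega domega x (vscal gam h) p ->
  gam * dot h (vsub x z) <= V x z - V p z + gam ^ 2 * norm h ^ 2 / 2.
Proof.
move=> omega_sc Xx Xz prox_p.
have Xp := proj1 prox_p.
have three := prox_three_point Xz prox_p; rewrite dot_scall in three.
have lb := bregman_ge_half_sq omega_sc Xx Xp.
have young := dot_le_half_sq (vscal gam h) (vsub x p).
rewrite dot_scall (norm_sq (vscal _ _)) dot_scall dot_scalr -norm_sq norm_vsubC in young.
have split_xz : dot h (vsub x z) = dot h (vsub x p) + dot h (vsub p z)
  by rewrite !dot_subr; ring.
rewrite split_xz; nra.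
Qed.

End Prox.

Lemma INR_ge1 {k} : (1 <= k)%N -> 1 <= INR k.
Proof. by move/leP/le_INR. Qed.

Lemma infeasible_step_descent {L mu c eta K gv E Vk Vk1 r2 : R} :
  0 < L -> 0 < mu -> 1 <= K ->
  2 * L / (mu * (K + 1)) * E <= Vk - Vk1 + (2 * L / (mu * (K + 1))) ^ 2 * c ^ 2 / 2 ->
  gv + mu / 2 * r2 <= E -> Vk <= L / 2 * r2 -> eta < gv ->
  K * (K + 1) * Vk1 + 2 * L * eta / mu * K < (K - 1) * K * Vk + 2 * L ^ 2 * c ^ 2 / mu ^ 2.
Proof.
move=> L_gt0 mu_gt0 K_ge1; set gam := 2 * L / (mu * (K + 1)) => prox sc Vk_le eta_lt.
have gam_gt0 : 0 < gam by apply: Rdiv_lt_0_compat; nra.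
have contract : mu / L * Vk <= mu / 2 * r2.
  have -> : mu / 2 * r2 = mu / L * (L / 2 * r2) by field; lra.
  by apply: Rmult_le_compat_l => //; apply/Rlt_le/Rdiv_lt_0_compat.
have gam_mu : gam * (mu / L) = 2 / (K + 1) by rewrite /gam; field; lra.
have one_step : gam * eta + 2 / (K + 1) * Vk < Vk - Vk1 + gam ^ 2 * c ^ 2 / 2.
  have : gam * eta < gam * (E - mu / L * Vk) by apply: Rmult_lt_compat_l; lra.
  rewrite -gam_mu; lra.
have KK_gt0 : 0 < K * (K + 1) by nra.
have := Rmult_lt_compat_l _ _ _ KK_gt0 one_step.
have -> : K * (K + 1) * (gam * eta + 2 / (K + 1) * Vk)
  = 2 * L * eta / mu * K + 2 * K * Vk by rewrite /gam; field; lra.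
have -> : K * (K + 1) * (Vk - Vk1 + gam ^ 2 * c ^ 2 / 2)
  = K * (K + 1) * Vk - K * (K + 1) * Vk1 + 2 * L ^ 2 * c ^ 2 / mu ^ 2 * (K / (K + 1))
  by rewrite /gam; field; lra.
have K_frac : K / (K + 1) <= 1.
  by apply: (Rmult_le_reg_r (K + 1)); [lra | rewrite Rmult_1_l /Rdiv Rmult_assoc Rinv_l; lra].
have C_ge0 : 0 <= 2 * L ^ 2 * c ^ 2 / mu ^ 2.
  by apply: Rmult_le_pos; [nra | apply/Rlt_le/Rinv_0_lt_compat; nra].
nra.
Qed.

Lemma telescope_lt {W : nat -> R} {a C : R} {N : nat} : (1 <= N)%N -> W 1%N = 0 ->
  (forall k, (1 <= k <= N)%N -> W k.+1 + a * INR k < W k + C) ->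
  W N.+1 + a * (INR N * (INR N + 1) / 2) < INR N * C.
Proof.
elim: N => [//|N IH] _ W1 step.
have stepN := step N.+1 (leqnn _).
rewrite S_INR; case: (posnP N) => [N0 | N_gt0].
  by move: stepN; rewrite N0 W1 /=; lra.
have IHN : W N.+1 + a * (INR N * (INR N + 1) / 2) < INR N * C.
  by apply: IH => // k /andP [k_ge1 k_le]; apply: step; rewrite k_ge1 ltnW.
move: stepN; rewrite S_INR.
have -> : a * ((INR N + 1) * (INR N + 1 + 1) / 2)
  = a * (INR N * (INR N + 1) / 2) + a * (INR N + 1) by field.
lra.
Qed.

Lemma tolerance_contradiction {L mu c eta Nr W : R} :
  0 < L -> 0 < mu -> 1 <= Nr -> 0 <= W -> 8 * L * c ^ 2 / (mu * Nr) <= eta ->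
  W + 2 * L * eta / mu * (Nr * (Nr + 1) / 2) < Nr * (2 * L ^ 2 * c ^ 2 / mu ^ 2) -> False.
Proof.
move=> L_gt0 mu_gt0 Nr_ge1 W_ge0 eta_ge sum_lt.
set A := L * c ^ 2 / mu.
have A_ge0 : 0 <= A by apply: Rmult_le_pos; [nra | apply/Rlt_le/Rinv_0_lt_compat].
(* after scaling, the two hypotheses read [8 A <= eta Nr] and [eta (Nr + 1) < 2 A] *)
have eta_Nr : 8 * A <= eta * Nr.
  have -> : 8 * A = 8 * L * c ^ 2 / (mu * Nr) * Nr by rewrite /A; field; lra.
  by apply: Rmult_le_compat_r; lra.
have scale_gt0 : 0 < L * Nr / mu by apply: Rdiv_lt_0_compat; nra.
have : L * Nr / mu * (eta * (Nr + 1)) < L * Nr / mu * (2 * A).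
  have -> : L * Nr / mu * (eta * (Nr + 1)) = 2 * L * eta / mu * (Nr * (Nr + 1) / 2)
    by field; lra.
  have -> : L * Nr / mu * (2 * A) = Nr * (2 * L ^ 2 * c ^ 2 / mu ^ 2) by rewrite /A; field; lra.
  lra.
move/(Rmult_lt_reg_l _ _ _ scale_gt0); nra.
Qed.

Lemma eta_P2_ge {N : nat} {L muf mug Lf LgX : R} : 0 < L -> 0 < mug -> (1 <= N)%N ->
  8 * L * LgX ^ 2 / (mug * INR N) <= eta_P2 N L muf mug Lf LgX.
Proof.
move=> L_gt0 mug_gt0 /INR_ge1 N_ge1; rewrite /eta_P2.
have -> : 8 * L * LgX ^ 2 / (mug * INR N) = 8 * L / INR N * mug * (LgX ^ 2 / mug ^ 2)
  by field; lra.
have ratio_ge0 : 0 <= LgX ^ 2 / mug ^ 2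
  by apply: Rmult_le_pos; [nra | apply/Rlt_le/Rinv_0_lt_compat; nra].
have : 0 < 8 * L / INR N by apply: Rdiv_lt_0_compat; lra.
have := Rmax_r muf mug; have := Rmax_r (Lf ^ 2 / muf ^ 2) (LgX ^ 2 / mug ^ 2).
move=> *; apply: Rmult_le_compat; nra.
Qed.

Section StepSizes.
Context {n d : nat} (L muf mug : R) (g : vec n -> vec d -> R) (x : nat -> vec n)
  (delta : nat -> vec d) (eta : R).
Hypotheses (L_gt0 : 0 < L) (muf_gt0 : 0 < muf) (mug_gt0 : 0 < mug).

Lemma inBP k : reflect (g (x k) (delta k) <= eta) (inB g x delta eta k).
Proof. by rewrite /inB; case: Rle_dec => gk; constructor. Qed.

Lemma a_csa_P2 k : a_csa L muf mug g x delta eta k = 2 / (INR k + 1).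
Proof.
have k1_gt0 : 0 < INR k + 1 by have := pos_INR k; lra.
by rewrite /a_csa /gamma_P2; case: inB; field; lra.
Qed.

Lemma A_csa_gt0 k : 0 < A_csa L muf mug g x delta eta k.
Proof.
elim: k => [|[|k] IH] /=; try lra.
apply: Rmult_lt_0_compat => //; rewrite a_csa_P2.
have K_ge2 : 2 <= INR k.+2 by rewrite !S_INR; have := pos_INR k; lra.
have -> : 1 - 2 / (INR k.+2 + 1) = (INR k.+2 - 1) / (INR k.+2 + 1) by field; lra.
apply: Rdiv_lt_0_compat; lra.
Qed.

Lemma rho_csa_gt0 k : 0 < rho_csa L muf mug g x delta eta k.
Proof.
apply: Rdiv_lt_0_compat; last exact: A_csa_gt0.
have := pos_INR k; rewrite /gamma_P2; case: inB => k_ge0; apply: Rdiv_lt_0_compat; nra.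
Qed.

End StepSizes.

Section InexactCSA.
Context {n d : nat} {X : vec n -> Prop} {Delta : vec d -> Prop}
  {g : vec n -> vec d -> R} {fp : vec n -> vec n} {gp : vec n -> vec d -> vec n}
  {omega : vec n -> R} {domega : vec n -> vec n} {L muf mug c eta : R} {N : nat}
  {x : nat -> vec n} {delta : nat -> vec d} {xs : vec n}.
Hypotheses (X_convex : convex_set X) (omega_grad : gradient_on X omega domega)
  (omega_sc : strongly_convex_on X 1 omega)
  (bregman_le : forall y z, X y -> X z ->
     bregman omega domega y z <= L / 2 * norm (vsub y z) ^ 2)
  (L_gt0 : 0 < L) (mug_gt0 : 0 < mug)
  (g_sc : forall dl y z, Delta dl -> X y -> X z ->
     g z dl + dot (gp z dl) (vsub y z) + mug / 2 * norm (vsub y z) ^ 2 <= g y dl)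
  (gp_le : forall y dl, X y -> Delta dl -> norm (gp y dl) <= c)
  (x1_in : X (x 1%N)) (delta_in : forall k, (1 <= k <= N)%N -> Delta (delta k))
  (prox_step : forall k, (1 <= k <= N)%N ->
     is_prox X omega domega (x k)
       (vscal (gamma_P2 L muf mug g x delta eta k) (csa_h fp gp g x delta eta k))
       (x k.+1))
  (xs_in : X xs) (xs_feasible : G_nonpos Delta g xs).

Lemma iterates_in k : (1 <= k <= N.+1)%N -> X (x k).
Proof.
case: k => [|[|k]] // /andP [_ k_le].
by case: (prox_step k.+1 _).
Qed.

(* The weight (k-1)k absorbs the contraction factor 1 - 2/(k+1) of step k. *)
Let W k := (INR k - 1) * INR k * bregman omega domega (x k) xs.

Lemma infeasible_iterate_descent k : (1 <= k <= N)%N -> ~~ inB g x delta eta k ->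
  W k.+1 + 2 * L * eta / mug * INR k < W k + 2 * L ^ 2 * c ^ 2 / mug ^ 2.
Proof.
move=> k_in k_out.
have /andP [k_ge1 k_le] := k_in.
have Xk : X (x k) by apply: iterates_in; rewrite k_ge1 ltnW.
have Dk := delta_in k k_in.
have prox := prox_step k k_in.
rewrite /gamma_P2 /csa_h (negbTE k_out) in prox.
set gam := 2 * L / (mug * (INR k + 1)) in prox.
set h := gp (x k) (delta k) in prox.
have descent := prox_step_bound X_convex omega_grad omega_sc Xk xs_in prox.
have h_sq : gam ^ 2 * norm h ^ 2 <= gam ^ 2 * c ^ 2.
  apply: Rmult_le_compat_l; first exact: pow2_ge_0.
  by apply: pow_incr; split; [apply: norm_ge0 | apply: gp_le].
have prox_bd : gam * dot h (vsub (x k) xs) <= bregman omega domega (x k) xs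
    - bregman omega domega (x k.+1) xs + gam ^ 2 * c ^ 2 / 2 by lra.
have sc_bd : g (x k) (delta k) + mug / 2 * norm (vsub (x k) xs) ^ 2
    <= dot h (vsub (x k) xs).
  have := g_sc _ _ _ Dk xs_in Xk; have := xs_feasible _ Dk.
  by rewrite -/h norm_vsubC !dot_subr; lra.
have Vk_le := bregman_le _ _ Xk xs_in.
have eta_lt : eta < g (x k) (delta k)
  by apply: Rnot_le_lt => /(inBP g x delta) k_B; rewrite k_B in k_out.
have := infeasible_step_descent L_gt0 mug_gt0 (INR_ge1 k_ge1) prox_bd sc_bd Vk_le eta_lt.
by rewrite /W S_INR; lra.
Qed.

Lemma has_inB : (1 <= N)%N -> 8 * L * c ^ 2 / (mug * INR N) <= eta ->
  has (inB g x delta eta) (index_iota 1 N.+1).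
Proof.
move=> N_ge1 eta_ge; apply/negPn/negP => /hasPn none_in.
have descent k : (1 <= k <= N)%N ->
    W k.+1 + 2 * L * eta / mug * INR k < W k + 2 * L ^ 2 * c ^ 2 / mug ^ 2.
  move=> k_in; apply: (infeasible_iterate_descent k k_in).
  by apply: none_in; rewrite mem_index_iota.
have W1 : W 1%N = 0 by rewrite /W /=; ring.
have W_ge0 : 0 <= W N.+1.
  have XN : X (x N.+1) by apply: iterates_in; rewrite /= leqnn.
  have := bregman_ge_half_sq X_convex omega_grad omega_sc XN xs_in.
  have := pow2_ge_0 (norm (vsub xs (x N.+1))); have := pos_INR N.
  by rewrite /W S_INR; nra.
exact: tolerance_contradiction L_gt0 mug_gt0 (INR_ge1 N_ge1) W_ge0 eta_ge
  (telescope_lt N_ge1 W1 descent).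
Qed.

End InexactCSA.

Theorem mainTheorem4
  (n d : nat) (X : vec n -> Prop) (Delta : vec d -> Prop)
  (f : vec n -> R) (g : vec n -> vec d -> R)
  (fp : vec n -> vec n) (gp : vec n -> vec d -> vec n)
  (Lf LgX LgD muf mug L : R)
  (omega : vec n -> R) (domega : vec n -> vec n)
  (N : nat) (x : nat -> vec n) (delta : nat -> vec d)
  (HXc : convex_set X) (HXk : compact_set X) (HDk : compact_set Delta)
  (Hfconv : convex_on X f) (Hflip : lipschitz_on X Lf f)
  (Hgconv : forall dl, Delta dl -> convex_on X (fun y => g y dl))
  (HgX : forall dl, Delta dl -> lipschitz_on X LgX (fun y => g y dl))
  (HgD : forall y, X y -> lipschitz_on Delta LgD (fun dl => g y dl))
  (Hopt : exists xs, X xs /\ G_nonpos Delta g xs /\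
            forall y, X y -> G_nonpos Delta g y -> f xs <= f y)
  (* subgradient oracles f'(x), g'(x,delta) (norms bounded by the Lipschitz constants) *)
  (Hfp : forall y, X y -> subgradient X f y (fp y) /\ norm (fp y) <= Lf)
  (Hgp : forall y dl, X y -> Delta dl ->
           subgradient X (fun z => g z dl) y (gp y dl) /\ norm (gp y dl) <= LgX)
  (Hgrad : gradient_on X omega domega) (Hdcont : continuous_vec_on X domega)
  (Homega : strongly_convex_on X 1 omega)
  (Hmuf : 0 < muf) (Hmug : 0 < mug) (HL : 0 < L)
  (Hfsc : forall y z, X y -> X z ->
            f z + dot (fp z) (vsub y z) + muf / 2 * (norm (vsub y z)) ^ 2 <= f y)
  (Hgsc : forall dl y z, Delta dl -> X y -> X z ->
            g z dl + dot (gp z dl) (vsub y z) + mug / 2 * (norm (vsub y z)) ^ 2 <= g y dl)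
  (HV : forall y z, X y -> X z ->
          bregman omega domega y z <= L / 2 * (norm (vsub y z)) ^ 2)
  (HN : (1 <= N)%nat)
  (Hx1 : X (x 1%nat))
  (Hdelta : forall k, (1 <= k <= N)%nat -> Delta (delta k))
  (Hstep : forall k, (1 <= k <= N)%nat ->
     is_prox X omega domega (x k)
       (vscal (gamma_P2 L muf mug g x delta (eta_P2 N L muf mug Lf LgX) k)
              (csa_h fp gp g x delta (eta_P2 N L muf mug Lf LgX) k))
       (x (S k))) :
  (exists k, (1 <= k <= N)%nat /\
     g (x k) (delta k) <= eta_P2 N L muf mug Lf LgX) /\
  0 < \big[Rplus/0]_(1 <= k < N.+1 | inB g x delta (eta_P2 N L muf mug Lf LgX) k)
        rho_csa L muf mug g x delta (eta_P2 N L muf mug Lf LgX) k.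
Proof.
have [xs [Xxs [xs_feasible _]]] := Hopt.
have gp_le y dl (Xy : X y) (Ddl : Delta dl) : norm (gp y dl) <= LgX
  := proj2 (Hgp y dl Xy Ddl).
have := has_inB HXc Hgrad Homega HV HL Hmug Hgsc gp_le Hx1 Hdelta Hstep Xxs xs_feasible
  HN (eta_P2_ge HL Hmug HN).
case/hasP => k k_in k_B.
split.
- by exists k; split; [rewrite mem_index_iota in k_in | apply/(inBP g x delta)].
- apply: (sumR_gt0_witness (iota_uniq _ _) k_in k_B) => i.
  exact: rho_csa_gt0.
Qed.
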